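(* Let $G$ be a layered graph over $\Sigma_{in}$ of depth $n$ and $\mathsf{C}$ a $(G,\Sigma_{out})$-code. Fix $w\in\Sigma_{out}^n$ and $\epsilon>0$. For any subset $S\subseteq L(\mathsf{C},w,\epsilon)$, there is a prefix tree of $S$.
   Context: A layered graph over alphabet $\Sigma$ of depth $n$ is a directed graph whose vertices are partitioned into layers $0,1,\dots,n$, with exactly one vertex (the root) in layer $0$, and where each vertex in layer $i<n$ has exactly $|\Sigma|$ out-edges to vertices in layer $i+1$, the out-edges being labeled by the distinct elements of $\Sigma$ (the endpoints need not be distinct). A string $p\in\Sigma_{in}^i$ determines a unique path from the root to layer $i$; $v(p)$ is its endpoint. A $(G,\Sigma_{out})$-code $\mathsf{C}$ is an assignment of an element of $\Sigma_{out}$ to each edge of $G$; $\mathsf{C}(p)\in\Sigma_{out}^i$ is the string of labels along the path $p$. For $x,y\in\Sigma^m$, $\Delta$ is Hamming distance and the suffix distance is $\Delta_{sfx}(x,y)=\max_{0\le i\le m-1}\frac{\Delta(x[i+1:m],y[i+1:m])}{m-i}$. Define $L_i(\mathsf{C},w,\epsilon)=\{v(p): p\in\Sigma_{in}^i,\ \Delta_{sfx}(\mathsf{C}(p),w[1:i])<1-\epsilon\}$ and $L(\mathsf{C},w,\epsilon)=\bigcup_{i=1}^n L_i(\mathsf{C},w,\epsilon)$. For $S\subseteq L(\mathsf{C},w,\epsilon)$, a prefix tree of $S$ is a union of paths $p(v)$, one for each $v\in S$, where $p(v)$ goes from the root to $v$ and satisfies $\Delta_{sfx}(\mathsf{C}(p(v)),w[1:|p(v)|])<1-\epsilon$,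 such that this union forms a rooted tree. *)

From HB Require Import structures.
From mathcomp Require Import all_boot all_order all_algebra.
Set Implicit Arguments. Unset Strict Implicit. Unset Printing Implicit Defensive.
Import Order.TTheory GRing.Theory Num.Theory.

(* Vertices carry a
   layer in {0,..,n}; the root is the unique vertex of layer 0; every vertex v
   of layer < n has exactly |Sin| out-edges, one labelled by each a : Sin,
   namely the edge (v,a) going to [next v a], which lies in layer (layer v)+1.
   (Endpoints of different edges need not be distinct.)  The out-edges of
   layer-n vertices are irrelevant ([next] is total for convenience). *)
Record layered_graph (Sin : finType) (n : nat) := LayeredGraph {
  vtx : Type;
  layer : vtx -> nat;
  root : vtx;
  next : vtx -> Sin -> vtx;
  layer_root : layer root = 0;
  root_unique : forall v, layer v = 0 -> v = root;
  layer_le : forall v, layer v <= n;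
  layer_next : forall v a, layer v < n -> layer (next v a) = (layer v).+1
}.

Section Defs.
Variables (Sin : finType) (Sout : eqType) (n : nat) (G : layered_graph Sin n).

Definition code := vtx G -> Sin -> Sout.

Definition vend (p : seq Sin) : vtx G := foldl (@next _ _ G) (root G) p.

Fixpoint enc_from (C : code) (v : vtx G) (p : seq Sin) : seq Sout :=
  match p with
  | [::] => [::]
  | a :: p' => C v a :: enc_from C (@next _ _ G v a) p'
  end.
Definition enc (C : code) (p : seq Sin) := enc_from C (root G) p.
End Defs.

Definition hamming (T : eqType) (x y : seq T) : nat :=
  count (fun xy : T * T => xy.1 != xy.2) (zip x y).

(* Suffix distance for x,y of length m:
   max_{0<=i<=m-1} Delta(x[i+1:m], y[i+1:m]) / (m-i)
   (x[i+1:m] is drop i x in 0-based indexing).  All terms are >= 0, so the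
   maximum is taken with neutral element 0 (the statement only uses m >= 1). *)
Definition sfx_dist (R : realFieldType) (T : eqType) (x y : seq T) : R :=
  \big[Num.max/0%R]_(i < size x)
     ((hamming (drop i x) (drop i y))%:R / (size x - i)%:R)%R.

Section L.
Variables (R : realFieldType) (Sin : finType) (Sout : eqType) (n : nat)
          (G : layered_graph Sin n) (C : code Sout G) (w : seq Sout) (eps : R).

Definition good_path (p : seq Sin) : Prop :=
  (sfx_dist R (enc C p) (take (size p) w) < 1 - eps)%R.

Definition inLi (i : nat) (v : vtx G) : Prop :=
  exists p : seq Sin, size p = i /\ vend G p = v /\ good_path p.

Definition inL (v : vtx G) : Prop := exists i, 1 <= i <= n /\ inLi i v.

Definition in_union (S : vtx G -> Prop) (P : vtx G -> seq Sin)
  (u : vtx G) (a : Sin) : Prop :=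
  exists v, S v /\ exists q, prefix (rcons q a) (P v) /\ u = vend G q.

Definition path_in_union S P (p : seq Sin) : Prop :=
  forall q a, prefix (rcons q a) p -> in_union S P (vend G q) a.

(* The union of the chosen paths forms a tree rooted at the root: every vertex
   of the union is reached from the root by exactly one path inside the union
   (existence is automatic, each vertex lying on some chosen path). *)
Definition union_is_rooted_tree S P : Prop :=
  forall p1 p2, path_in_union S P p1 -> path_in_union S P p2 ->
    vend G p1 = vend G p2 -> p1 = p2.

Definition prefix_tree S (P : vtx G -> seq Sin) : Prop :=
  (forall v, S v -> vend G (P v) = v /\ good_path (P v)) /\
  union_is_rooted_tree S P.
End L.

(* Write [d_i = [C(p)_i <> w_i] - (1 - eps)] for the excess of mismatches along a
   path [p].  Then [Delta_sfx(C(p), w) < 1 - eps] iff every nonempty suffix of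
   [d] has negative sum, i.e. iff the maximal suffix sum [A(p)] is negative.
   Since [A(pa) = max(0, A(p)) + d] and [d] only depends on the endpoint and the
   length of [p] and on [a], a Viterbi-style dynamic programme picks, for every
   vertex, a path of minimal [A] that extends the path picked for one of its
   predecessors.  Every prefix of a picked path is picked, so a path of the union
   is picked for its endpoint; as lengths are layers, it is unique. *)
From Pilot Require Import Defs.
From HB Require Import structures.
From mathcomp Require Import all_boot all_order all_algebra.
From mathcomp Require Import boolp ring.
Import Order.TTheory GRing.Theory Num.Theory.
Set Implicit Arguments. Unset Strict Implicit. Unset Printing Implicit Defensive.
Local Open Scope ring_scope.

Lemma drop_zip (S T : Type) i (s : seq S) (t : seq T) :
  drop i (zip s t) = zip (drop i s) (drop i t).
Proof.
by elim: s t i => [|x s IH] [|y t] [|i] //=; rewrite ?IH //; case: (drop _ _).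
Qed.

Section MaxSuffixSum.
Variable R : realDomainType.

Definition max_suffix_sum (s : seq R) : R :=
  foldl (fun m d => Num.max 0 m + d) 0 s.

Lemma max_suffix_sum_rcons s d :
  max_suffix_sum (rcons s d) = Num.max 0 (max_suffix_sum s) + d.
Proof. by rewrite /max_suffix_sum foldl_rcons. Qed.

Lemma sum_drop_rcons i (s : seq R) d : (i <= size s)%N ->
  \sum_(x <- drop i (rcons s d)) x = \sum_(x <- drop i s) x + d.
Proof. by move=> le_is; rewrite drop_rcons // -cats1 big_cat big_seq1. Qed.

Lemma max_suffix_sum_addr_lt0 (s : seq R) d :
  Num.max 0 (max_suffix_sum s) + d < 0 <->
  forall i, (i <= size s)%N -> \sum_(x <- drop i s) x + d < 0.
Proof.
elim/last_ind: s d => [|s e IH] d.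
  rewrite /max_suffix_sum /= maxxx big_nil !add0r.
  by split=> [d_lt0 i _ | /(_ 0%N (leqnn 0))].
rewrite max_suffix_sum_rcons addr_maxl gt_max add0r -addrA size_rcons; split.
  case/andP=> d_lt0 /IH lt0 i; rewrite leq_eqVlt ltnS => /orP[/eqP->|le_is].
    by rewrite drop_oversize ?size_rcons // big_nil add0r.
  by rewrite sum_drop_rcons // -addrA lt0.
move=> lt0; apply/andP; split.
  by move: (lt0 _ (leqnn _)); rewrite drop_oversize ?size_rcons // big_nil add0r.
by apply/IH => i le_is; rewrite addrA -sum_drop_rcons // lt0 // leqW.
Qed.

Lemma max_suffix_sum_lt0 (s : seq R) : (0 < size s)%N ->
  max_suffix_sum s < 0 <-> forall i, (i < size s)%N -> \sum_(x <- drop i s) x < 0.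
Proof.
case/lastP: s => // s d _; rewrite max_suffix_sum_rcons max_suffix_sum_addr_lt0.
rewrite size_rcons; split=> lt0 i le_is; first by rewrite sum_drop_rcons ?lt0.
by rewrite -sum_drop_rcons ?lt0.
Qed.

End MaxSuffixSum.

Section SuffixDistance.
Variables (R : realFieldType) (T : eqType).

Definition mismatch_excess (c : R) (x y : seq T) : seq R :=
  [seq (xy.1 != xy.2)%:R - c | xy <- zip x y].

Lemma sum_mismatch_excess c x y :
  \sum_(d <- mismatch_excess c x y) d = (hamming x y)%:R - c * (size (zip x y))%:R.
Proof.
rewrite /mismatch_excess /hamming; elim: (zip x y) => [|xy z IH] /=.
  by rewrite big_nil mulr0 subr0.
by rewrite big_cons IH natrD -addn1 natrD; ring.
Qed.

Lemma sfx_dist_lt_excess c x y : size x = size y -> (0 < size x)%N ->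
  sfx_dist R x y < c <-> max_suffix_sum (mismatch_excess c x y) < 0.
Proof.
move=> eq_size x_gt0.
have excess_ltE i : (i < size x)%N ->
    ((hamming (drop i x) (drop i y))%:R / (size x - i)%:R < c) =
    (\sum_(d <- drop i (mismatch_excess c x y)) d < 0).
  move=> lt_ix; rewrite ltr_pdivrMr ?ltr0n ?subn_gt0 // -subr_lt0.
  by rewrite -map_drop drop_zip sum_mismatch_excess size_zip !size_drop eq_size minnn.
rewrite max_suffix_sum_lt0 ?size_map ?size_zip -?eq_size ?minnn // /sfx_dist.
split.
  by case/bigmax_ltP=> _ lt_c i lt_ix; rewrite -excess_ltE // (lt_c (Ordinal lt_ix)).
move=> lt0; apply/bigmax_ltP; split=> [|i _]; last by rewrite excess_ltE ?lt0.
by have := lt0 0%N x_gt0; rewrite -excess_ltE //; apply: le_lt_trans; apply: divr_ge0.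
Qed.

End SuffixDistance.

Section LayeredPaths.
Variables (Sin : finType) (n : nat) (G : layered_graph Sin n).

Lemma vend_rcons q a : vend G (rcons q a) = Defs.next (vend G q) a.
Proof. by rewrite /vend foldl_rcons. Qed.

Lemma layer_vend p : (size p <= n)%N -> layer (vend G p) = size p.
Proof.
elim/last_ind: p => [|q a IH]; first by rewrite /vend layer_root.
rewrite size_rcons vend_rcons => lt_qn.
by rewrite layer_next IH // ltnW.
Qed.

End LayeredPaths.

Section OptimalPaths.
Variables (R : realDomainType) (Sin : finType) (n : nat) (G : layered_graph Sin n).
Variable score : seq Sin -> R.

Definition extension (f : vtx G -> seq Sin) q a := rcons (f (vend G q)) a.

(* Vertices need not form a finite type, so the predecessors of [u] in layer
   [k] are enumerated through the paths [t.1] of length [k] reaching them. *)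
Definition best_step k (f : vtx G -> seq Sin) (u : vtx G) : seq Sin :=
  let P (t : k.-tuple Sin * Sin) := `[< vend G (extension f t.1 t.2) = u >] in
  if [pick t | P t] is Some t0 then
    let t := [arg min_(t < t0 | P t) score (extension f t.1 t.2)]%O in
    extension f t.1 t.2
  else [::].

Fixpoint best k : vtx G -> seq Sin :=
  if k is k'.+1 then best_step k' (best k') else fun=> [::].

Definition opt p := best (size p) (vend G p).

Definition optimal p := opt p = p.

Variant best_step_spec k f u : seq Sin -> Prop :=
| BestStepNone of (forall (q : k.-tuple Sin) a, vend G (extension f q a) <> u) :
    best_step_spec k f u [::]
| BestStepSome (t : k.-tuple Sin * Sin) of vend G (extension f t.1 t.2) = u &
    (forall (q : k.-tuple Sin) a, vend G (extension f q a) = u ->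
       score (extension f t.1 t.2) <= score (extension f q a)) :
    best_step_spec k f u (extension f t.1 t.2).

Lemma best_stepP k f u : best_step_spec k f u (best_step k f u).
Proof.
rewrite /best_step; case: pickP => [t0 t0_u | no_cand].
  case: arg_minP => // t /asboolP t_u min_t; apply: BestStepSome => // q a qa_u.
  by apply: (min_t (q, a)); apply/asboolP.
by apply: BestStepNone => q a /asboolT; rewrite (no_cand (q, a)).
Qed.

Lemma opt_path p : size (opt p) = size p /\ vend G (opt p) = vend G p.
Proof.
rewrite /opt; have [k size_p] : exists k, size p = k by exists (size p).
rewrite size_p; elim: k p size_p => [|k IH] p; first by move/size0nil->.
case/lastP: p => // q a; rewrite size_rcons => -[size_q] /=.
have q_cand : vend G (extension (best k) q a) = vend G (rcons q a).
  by rewrite /extension !vend_rcons (IH q size_q).2.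
case: best_stepP => [no_cand | t t_u _].
  by case: (no_cand (Tuple (introT eqP size_q)) a).
by rewrite t_u /extension size_rcons (IH t.1 (size_tuple t.1)).1.
Qed.

Lemma size_opt p : size (opt p) = size p. Proof. exact: (opt_path p).1. Qed.

Lemma vend_opt p : vend G (opt p) = vend G p. Proof. exact: (opt_path p).2. Qed.

Lemma optimal_opt p : optimal (opt p).
Proof. by rewrite /optimal {1}/opt size_opt vend_opt. Qed.

Lemma optimal_belast q a : optimal (rcons q a) -> optimal q.
Proof.
rewrite /optimal /opt size_rcons /=.
case: best_stepP => [_ | t _ _ /rcons_inj [q_eq _]]; first by case: q.
have -> : q = opt t.1 by rewrite /opt size_tuple q_eq.
exact: optimal_opt.
Qed.

Lemma optimal_prefix p q : optimal p -> prefix q p -> optimal q.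
Proof.
move=> opt_p /prefixP [r p_qr]; move: opt_p; rewrite {p}p_qr.
elim/last_ind: r => [|r a IH]; first by rewrite cats0.
by rewrite -rcons_cat => /optimal_belast.
Qed.

Lemma optimal_inj p1 p2 : optimal p1 -> optimal p2 ->
  (size p1 <= n)%N -> (size p2 <= n)%N -> vend G p1 = vend G p2 -> p1 = p2.
Proof.
move=> opt_p1 opt_p2 le_p1n le_p2n eq_v; rewrite -opt_p1 -opt_p2 /opt.
by rewrite -(layer_vend G le_p1n) -(layer_vend G le_p2n) eq_v.
Qed.

Lemma path_in_union_optimal (S : vtx G -> Prop) (P : vtx G -> seq Sin) p :
    (forall v, S v -> optimal (P v) /\ (size (P v) <= n)%N) ->
  path_in_union S P p -> optimal p /\ (size p <= n)%N.
Proof.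
move=> P_opt; elim/last_ind: p => [|q a IH] qa_union; first by [].
have [opt_q le_qn] : optimal q /\ (size q <= n)%N.
  apply: IH => q' a' pref_q; apply: qa_union.
  exact: prefix_trans pref_q (prefix_rcons q a).
have [v [Sv [q' [pref_v eq_v]]]] := qa_union q a (prefix_refl _).
have [opt_v le_vn] := P_opt v Sv.
have opt_q'a := optimal_prefix opt_v pref_v.
have le_q'a : (size (rcons q' a) <= n)%N := leq_trans (size_prefix pref_v) le_vn.
suff -> : q = q' by [].
apply: optimal_inj opt_q (optimal_belast opt_q'a) le_qn _ eq_v.
by rewrite size_rcons in le_q'a; apply: ltnW.
Qed.

Lemma optimal_union_is_rooted_tree (S : vtx G -> Prop) (P : vtx G -> seq Sin) :
    (forall v, S v -> optimal (P v) /\ (size (P v) <= n)%N) ->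
  union_is_rooted_tree S P.
Proof.
move=> P_opt p1 p2 /(path_in_union_optimal P_opt) [opt_p1 le_p1n].
by move=> /(path_in_union_optimal P_opt) [opt_p2 le_p2n]; apply: optimal_inj.
Qed.

Hypothesis score_rcons_le : forall q q' a, (size q < n)%N -> size q = size q' ->
  vend G q = vend G q' -> score q <= score q' -> score (rcons q a) <= score (rcons q' a).

Lemma opt_le p : (size p <= n)%N -> score (opt p) <= score p.
Proof.
elim/last_ind: p => [|q a IH]; first by rewrite /opt /=.
rewrite size_rcons => lt_qn; rewrite /opt size_rcons /=.
case: best_stepP => [no_cand | t _ min_t].
  by case: (no_cand (in_tuple q) a); rewrite /extension !vend_rcons -/(opt q) vend_opt.
apply: le_trans (min_t (in_tuple q) a _) _.
  by rewrite /extension !vend_rcons -/(opt q) vend_opt.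
by apply: score_rcons_le; rewrite ?size_opt ?vend_opt // IH // ltnW.
Qed.

End OptimalPaths.

Section ExcessScore.
Variables (R : realFieldType) (Sin : finType) (Sout : eqType) (n : nat).
Variables (G : layered_graph Sin n) (C : code Sout G) (w : seq Sout) (eps : R).
Hypothesis size_w : size w = n.

Definition excess_score p :=
  max_suffix_sum (mismatch_excess (1 - eps) (enc C p) (take (size p) w)).

Lemma size_enc p : size (enc C p) = size p.
Proof. by rewrite /enc; elim: p (Defs.root G) => //= a p IH v; rewrite IH. Qed.

Lemma enc_rcons q a : enc C (rcons q a) = rcons (enc C q) (C (vend G q) a).
Proof. by rewrite /enc /vend; elim: q (Defs.root G) => //= b q IH v; rewrite IH. Qed.

Lemma excess_score_rcons q a : (size q < n)%N ->
  excess_score (rcons q a) = Num.max 0 (excess_score q) +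
    ((C (vend G q) a != nth (C (vend G q) a) w (size q))%:R - (1 - eps)).
Proof.
move=> lt_qn; rewrite /excess_score size_rcons (take_nth (C (vend G q) a)) ?size_w //.
rewrite enc_rcons /mismatch_excess zip_rcons; last by rewrite size_enc size_takel // size_w ltnW.
by rewrite map_rcons max_suffix_sum_rcons.
Qed.

Lemma excess_score_rcons_le q q' a : (size q < n)%N -> size q = size q' ->
    vend G q = vend G q' -> excess_score q <= excess_score q' ->
  excess_score (rcons q a) <= excess_score (rcons q' a).
Proof.
move=> lt_qn eq_size eq_v le_qq'; have lt_q'n : (size q' < n)%N by rewrite -eq_size.
by rewrite !excess_score_rcons // eq_size eq_v lerD2r; apply: le_max2.
Qed.

Lemma good_path_excess_score p : (0 < size p <= n)%N ->
  good_path C w eps p <-> excess_score p < 0.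
Proof.
case/andP=> p_gt0 le_pn; apply: sfx_dist_lt_excess; rewrite size_enc //.
by rewrite size_takel // size_w.
Qed.

End ExcessScore.

Theorem lemma5p4 (R : realFieldType) (Sin : finType) (Sout : eqType) (n : nat)
  (G : layered_graph Sin n) (C : code Sout G) (w : seq Sout) (eps : R) :
  size w = n -> (0 < eps)%R ->
  forall S : vtx G -> Prop,
    (forall v, S v -> inL C w eps v) ->
    exists P : vtx G -> seq Sin, prefix_tree C w eps S P.
Proof.
move=> size_w _ S S_L; pose score := excess_score C w eps.
pose P := fun v : vtx G => best score (layer v) v.
have S_opt v : S v -> exists p, [/\ P v = opt G score p, (0 < size p <= n)%N,
    vend G p = v & good_path C w eps p].
  case/S_L=> i [range_i [p [size_p [<- good_p]]]]; exists p; split=> //.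
    by rewrite /P /opt layer_vend // size_p; case/andP: range_i.
  by rewrite size_p.
have P_opt v : S v -> optimal G score (P v) /\ (size (P v) <= n)%N.
  by case/S_opt=> p [-> /andP[_ le_pn] _ _]; rewrite size_opt; split; first exact: optimal_opt.
exists P; split; last exact: optimal_union_is_rooted_tree P_opt.
move=> v /S_opt [p [-> size_p <- good_p]]; split; first exact: vend_opt.
have size_opt_p : (0 < size (opt G score p) <= n)%N by rewrite size_opt.
apply/(good_path_excess_score C eps size_w size_opt_p).
have [_ le_pn] := andP size_p.
apply: le_lt_trans (opt_le (excess_score_rcons_le size_w) le_pn) _.
exact/(good_path_excess_score C eps size_w size_p).
Qed.
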